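(* Let $\mathcal A_{0-2}$ be the finite automaton with final state output having states $a_0,a_1,a_2$, input alphabet $X_3=\{0,1,2\}$, initial state $a_1$, transitions $a_1\xrightarrow{0}a_0$, $a_1\xrightarrow{1}a_1$, $a_1\xrightarrow{2}a_2$, and $a_0\xrightarrow{x}a_0$, $a_2\xrightarrow{x}a_2$ for all $x\in X_3$, and output $1$ at $a_0$, $1$ at $a_1$, $-1$ at $a_2$. Then $w_\alpha$ is a ternary automatic sequence produced by $\mathcal A_{0-2}$: for every integer $i\ge0$ and every word $u_0u_1\dots u_m$ over $X_3$ with $i=\sum_{j=0}^m u_j3^j$, the output of the state reached from $a_1$ after reading $u_0,u_1,\dots,u_m$ in this order is the $i$-th term (indexing from $0$) of $w_\alpha$.
   Context: $w_\alpha=\lim_{n\to\infty}\phi^n(1)$, where $\phi$ is the monoid endomorphism of $\{1,-1\}^*$ determined by $\phi(1)=1\,1\,(-1)$ and $\phi(-1)=1\,(-1)\,(-1)$. Input digits are read least significant first. *)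

From mathcomp Require Import all_boot all_order all_algebra.
Set Implicit Arguments. Unset Strict Implicit. Unset Printing Implicit Defensive.
Import GRing.Theory Num.Theory.
Local Open Scope ring_scope.

(* Letters of {1,-1} are represented as integers 1 and -1. *)

Definition phi_letter (x : int) : seq int :=
  if x == 1 then [:: 1; 1; -1] else [:: 1; -1; -1].

Definition phi (s : seq int) : seq int := flatten (map phi_letter s).

Definition phi_iter (n : nat) : seq int := iter n phi [:: 1].

(* w is the limit of phi^n(1): every phi^n(1) is a prefix of w. *)
Definition is_limit_word (w : nat -> int) : Prop :=
  forall (n k : nat), (k < size (phi_iter n))%N -> w k = nth 0 (phi_iter n) k.

Inductive astate := a0 | a1 | a2.

Definition adelta (q : astate) (x : nat) : astate :=
  match q with
  | a1 => if x == 0%N then a0 else if x == 1%N then a1 else a2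
  | a0 => a0
  | a2 => a2
  end.

Definition aout (q : astate) : int :=
  match q with a0 => 1 | a1 => 1 | a2 => -1 end.

Definition arun (q : astate) (u : seq nat) : astate := foldl adelta q u.

Definition base3_value (u : seq nat) : nat :=
  \sum_(j < size u) nth 0%N u j * 3 ^ j.

(* Reading the least significant digit first, the index 3k + d of w is the
   d-th letter of the block phi(w_k), and phi(x) = 1 x (-1): digit 0 gives 1,
   digit 2 gives -1 and digit 1 passes to w_k.  This is exactly the automaton,
   where a_0 and a_2 are sinks with outputs 1 and -1 and a_1 reads the next
   digit.  The induction on u takes place in the prefix phi^(size u)(1) of w,
   whose length 3^(size u) exceeds the value of u. *)

From mathcomp Require Import all_boot all_order all_algebra.
From mathcomp Require Import zify.
Local Open Scope ring_scope.

Lemma size_phi_letter (x : int) : size (phi_letter x) = 3%N.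
Proof. by rewrite /phi_letter; case: ifP. Qed.

Lemma size_phi (s : seq int) : size (phi s) = (3 * size s)%N.
Proof.
elim: s => [|x s IH] //.
by rewrite /phi /= size_cat -/(phi s) IH size_phi_letter mulnS.
Qed.

Lemma phi_iterS (n : nat) : phi_iter n.+1 = phi (phi_iter n).
Proof. by []. Qed.

Lemma size_phi_iter (n : nat) : size (phi_iter n) = (3 ^ n)%N.
Proof. by elim: n => [|n IH] //; rewrite phi_iterS size_phi IH expnS. Qed.

Lemma nth_phi (s : seq int) (k d : nat) : (k < size s)%N -> (d < 3)%N ->
  nth 0 (phi s) (3 * k + d) = nth 0 (phi_letter (nth 0 s k)) d.
Proof.
elim: s k => [|x s IH] [|k] //= lt_k lt_d.
  by rewrite /phi /= nth_cat size_phi_letter muln0 lt_d.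
rewrite /phi /= -/(phi s) nth_cat size_phi_letter.
have -> : (3 * k.+1 + d < 3)%N = false by lia.
have -> : (3 * k.+1 + d - 3 = 3 * k + d)%N by lia.
exact: IH.
Qed.

Lemma base3_value_cons (d : nat) (u : seq nat) :
  base3_value (d :: u) = (d + 3 * base3_value u)%N.
Proof.
rewrite /base3_value /= big_ord_recl /= expn0 muln1 big_distrr /=.
by congr (_ + _)%N; apply: eq_bigr => j _; rewrite expnS mulnCA.
Qed.

Lemma base3_value_lt (u : seq nat) :
  all (fun d => (d < 3)%N) u -> (base3_value u < 3 ^ size u)%N.
Proof.
elim: u => [|d u IH] /=; first by rewrite /base3_value big_ord0.
by case/andP=> lt_d /IH lt_u; rewrite base3_value_cons expnS; lia.
Qed.

Lemma arun_sink (q : astate) (u : seq nat) :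
  (forall x, adelta q x = q) -> arun q u = q.
Proof. by move=> sink_q; elim: u => //= x u; rewrite /arun /= sink_q. Qed.

Lemma aout_arun_cons (d : nat) (u : seq nat) : (d < 3)%N ->
  aout (arun a1 (d :: u)) = nth 0 (phi_letter (aout (arun a1 u))) d.
Proof.
have out_a0 := @arun_sink a0 u (fun _ => erefl).
have out_a2 := @arun_sink a2 u (fun _ => erefl).
rewrite /arun /= -!/(arun _ u).
by case: d => [|[|[|]]] //= _; rewrite ?out_a0 ?out_a2; case: (arun a1 u).
Qed.

Lemma nth_phi_iter_base3 (u : seq nat) : all (fun d => (d < 3)%N) u ->
  nth 0 (phi_iter (size u)) (base3_value u) = aout (arun a1 u).
Proof.
elim: u => [|d u IH]; first by rewrite /base3_value big_ord0.
case/andP=> lt_d digits_u.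
rewrite base3_value_cons addnC phi_iterS.
by rewrite nth_phi ?size_phi_iter ?base3_value_lt // IH // aout_arun_cons.
Qed.

Theorem mainTheorem5 (w : nat -> int) :
  is_limit_word w ->
  forall (i : nat) (u : seq nat),
    all (fun d => (d < 3)%N) u ->
    i = base3_value u ->
    aout (arun a1 u) = w i.
Proof.
move=> w_lim i u digits_u ->.
rewrite (w_lim (size u)) ?size_phi_iter ?base3_value_lt //.
by rewrite nth_phi_iter_base3.
Qed.
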